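(* In the online tolling setting described in the context, let the tolls be generated by $\boldsymbol{\tau}^{(1)}=\bm{0}$ and $\boldsymbol{\tau}^{(t+1)}=(\boldsymbol{\tau}^{(t)}-\gamma(\bm{c}-\bm{x}^t))_+$ (componentwise positive part), where $\bm{x}^t$ are the equilibrium edge flows under $\boldsymbol{\tau}^{(t)}$, with a step size $0<\gamma\le1$. Then for every edge $e\in E$ and every period $t$, $$\tau^{(t)}_e\le\max_{u\in\mathcal{U}}\lambda_u+\max_{e'\in E}c_{e'}+|\mathcal{U}|.$$
   Context: Network: directed graph $G=(V,E)$, edge capacities $c_e\ge0$, fixed edge travel times $l_e\ge0$. Finite user set $\mathcal{U}$; user $u$ has fixed outside-option cost $\lambda_u\ge0$. In each period $t$, O-D pairs $w^t_u$ and values of time $v^t_u\ge0$ are drawn i.i.d. across periods from a distribution $\mathcal{D}$; $\mathcal{P}^t_u$ is the finite set of paths for $w^t_u$. Given tolls $\boldsymbol{\tau}^{(t)}$, the period-$t$ equilibrium assigns each user to a path $P\in\mathcal{P}^t_u$ or the outside option so as to minimize cost ($v^t_u\sum_{e\in P}l_e+\sum_{e\in P}\tau^{(t)}_e$ for a path, $\lambda_u$ for the outside option; capacities need not be respected), with edge flows $x^t_e$ equal to the number of users whose chosen path contains $e$. *)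

From HB Require Import structures.
From mathcomp Require Import all_boot all_order all_algebra.
Set Implicit Arguments. Unset Strict Implicit. Unset Printing Implicit Defensive.
Import Order.TTheory GRing.Theory Num.Theory.
Local Open Scope ring_scope.

Definition is_path (V E : finType) (src dst : E -> V) (o d : V) (p : seq E) : bool :=
  match p with
  | [::] => false
  | e0 :: _ =>
      [&& src e0 == o,
          dst (last e0 p) == d,
          path (fun e f => dst e == src f) e0 (behead p)
        & uniq (src e0 :: map dst p)]
  end.

Definition path_cost (R : numDomainType) (E : finType) (l : E -> R) (v : R)
  (tau : E -> R) (P : seq E) : R :=
  v * (\sum_(e <- P) l e) + \sum_(e <- P) tau e.

(* Cost of a choice: [None] = outside option (cost lambda), [Some P] = path P. *)
Definition choice_cost (R : numDomainType) (E : finType) (l : E -> R) (v lam : R)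
  (tau : E -> R) (ch : option (seq E)) : R :=
  if ch is Some P then path_cost l v tau P else lam.

(* [ch] is an equilibrium assignment given available paths [paths u],
   values of time [v u], outside options [lam u] and tolls [tau]:
   each user picks a feasible option of minimal cost
   (capacities are not enforced). *)
Definition is_equilibrium (R : numDomainType) (E U : finType) (l : E -> R)
  (lam v : U -> R) (paths : U -> seq (seq E)) (tau : E -> R)
  (ch : U -> option (seq E)) : Prop :=
  forall u,
    (if ch u is Some P then P \in paths u else true) /\
    choice_cost l (v u) (lam u) tau (ch u) <= lam u /\
    (forall P, P \in paths u -> choice_cost l (v u) (lam u) tau (ch u) <= path_cost l (v u) tau P).

Definition edge_flow (R : numDomainType) (E U : finType) (ch : U -> option (seq E)) (e : E) : R :=
  (#|[set u | if ch u is Some P then e \in P else false]|)%:R.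

From HB Require Import structures.
From mathcomp Require Import all_boot all_order all_algebra.
From mathcomp Require Import lra.
Import Order.TTheory GRing.Theory Num.Theory.
Local Open Scope ring_scope.

(* Tolls stay nonnegative, and a path through an edge costs at least that
   edge's toll. So once the toll of [e] exceeds every outside option, no user
   routes through [e]: its flow is 0, and the update can only lower the toll.
   While the toll is at most [max lam], one update raises it by at most
   [gamma * x <= |U|]. Hence [tau <= max lam + |U|] by induction; the capacity
   term of the bound is slack. *)

Lemma edge_flow_le_card (R : numDomainType) {E U : finType}
    (ch : U -> option (seq E)) (e : E) :
  edge_flow R ch e <= #|U|%:R.
Proof. by rewrite /edge_flow ler_nat max_card. Qed.

Lemma toll_le_path_cost {R : numDomainType} {E : finType} {l tau : E -> R}
    {v : R} {P : seq E} {e : E} :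
  (forall e', 0 <= l e') -> (forall e', 0 <= tau e') -> 0 <= v ->
  e \in P -> tau e <= path_cost l v tau P.
Proof.
move=> hl htau hv eP.
have tau_le_sum : tau e <= \sum_(e' <- P) tau e'.
  by rewrite (big_rem _ eP) /= lerDl sumr_ge0.
have time_ge0 : 0 <= v * \sum_(e' <- P) l e' by rewrite mulr_ge0 // sumr_ge0.
by rewrite /path_cost (le_trans tau_le_sum) // lerDr.
Qed.

Lemma equilibrium_edge_flow_eq0 {R : numDomainType} {E U : finType}
    {l : E -> R} {lam v : U -> R} {paths : U -> seq (seq E)} {tau : E -> R}
    {ch : U -> option (seq E)} {e : E} :
  (forall e', 0 <= l e') -> (forall e', 0 <= tau e') -> (forall u, 0 <= v u) ->
  is_equilibrium l lam v paths tau ch ->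
  (forall u, lam u < tau e) -> edge_flow R ch e = 0.
Proof.
move=> hl htau hv heq toll_gt.
rewrite /edge_flow (_ : [set u | _] = set0) ?cards0 //.
apply/setP=> u; rewrite !inE.
case chu: (ch u) => [P|] //; apply/negP=> eP.
have [_ [cost_le_lam _]] := heq u; rewrite chu /= in cost_le_lam.
have := le_trans (toll_le_path_cost hl htau (hv u) eP) cost_le_lam.
by rewrite lt_geF ?toll_gt.
Qed.

Lemma toll_update_le {R : realDomainType} {gamma c x y L n : R} :
  0 < gamma -> gamma <= 1 -> 0 <= c -> 0 <= x <= n -> 0 <= L ->
  y <= L + n -> (L < y -> x = 0) ->
  Num.max 0 (y - gamma * (c - x)) <= L + n.
Proof.
move=> gamma_gt0 gamma_le1 c_ge0 /andP[x_ge0 x_le_n] L_ge0 y_le flow0.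
have n_ge0 : 0 <= n by rewrite (le_trans x_ge0).
rewrite ge_max addr_ge0 //= mulrBr.
have gc_ge0 : 0 <= gamma * c by rewrite mulr_ge0 // ltW.
have [y_le_L | L_lt_y] := leP y L.
- have : gamma * x <= x by rewrite ler_piMl.
  lra.
- rewrite flow0 // mulr0; lra.
Qed.

(* Periods are indexed from 0: tau 0 is tau^(1), OD t / vt t / ch t are the
   draws and equilibrium of the corresponding period. *)
Theorem lemma4 (R : realFieldType) (V E U : finType) (src dst : E -> V)
  (c l : E -> R) (lam : U -> R)
  (Paths : V -> V -> seq (seq E))
  (OD : nat -> U -> (V * V)%type) (vt : nat -> U -> R)
  (gamma : R) (tau : nat -> E -> R) (ch : nat -> U -> option (seq E))
  (hc : forall e, 0 <= c e) (hl : forall e, 0 <= l e) (hlam : forall u, 0 <= lam u)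
  (hPaths : forall o d P, P \in Paths o d -> is_path src dst o d P)
  (hvt : forall t u, 0 <= vt t u)
  (hgamma0 : 0 < gamma) (hgamma1 : gamma <= 1)
  (htau0 : forall e, tau 0%N e = 0)
  (heq : forall t, is_equilibrium l lam (vt t)
                     (fun u => Paths (OD t u).1 (OD t u).2) (tau t) (ch t))
  (hupd : forall t e, tau t.+1 e =
            Num.max 0 (tau t e - gamma * (c e - edge_flow R (ch t) e))) :
  forall t e,
    tau t e <= \big[Num.max/0]_(u : U) lam u + \big[Num.max/0]_(e' : E) c e' + (#|U|)%:R.
Proof.
set L := \big[Num.max/0]_(u : U) lam u; set C := \big[Num.max/0]_(e' : E) c e'.
have L_ge0 : 0 <= L by apply: bigmax_ge_id.
have C_ge0 : 0 <= C by apply: bigmax_ge_id.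
have tau_ge0 t e : 0 <= tau t e by case: t => [|t]; rewrite ?htau0 // hupd le_max lexx.
have tau_le t e : tau t e <= L + #|U|%:R.
  elim: t e => [|t IH] e; first by rewrite htau0 addr_ge0.
  rewrite hupd toll_update_le ?ler0n ?edge_flow_le_card // => L_lt_tau.
  apply: (equilibrium_edge_flow_eq0 hl (tau_ge0 t) (hvt t) (heq t)) => u.
  exact: le_lt_trans (le_bigmax _ _ u) L_lt_tau.
by move=> t e; rewrite (le_trans (tau_le t e)) // [leRHS]addrAC lerDl.
Qed.
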